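(* Let $n\ge3$ and suppose $T=T_\lambda(r,m)$ acts linearly and inner faithfully on $\Bbbk\overline{Q}$, where $g$ acts either as a rotation ($g\cdot e_i=e_{i+d}$, $g\cdot a_i=\mu_ia_{i+d}$, $g\cdot a_i^*=\mu_i^*a^*_{i+d}$) or as a reflection ($g\cdot e_i=e_{n-(d+i)}$, $g\cdot a_i=\mu_ia^*_{n-(d+i+1)}$, $g\cdot a_i^*=\mu_i^*a_{n-(d+i+1)}$), with $0\le d\le n-1$ and $\mu_i,\mu_i^*\in\Bbbk^\times$. Then the action descends to an action on $\Pi_Q$ if and only if for all $i$ $$\mu_i\mu_i^*-\mu_{i+1}\mu_{i+1}^*=0$$ and $$a_i^*\sigma(a_i)+\sigma(a_i^* )(g\cdot a_i)-a_{i+1}\sigma(a_{i+1}^* )-\sigma(a_{i+1})(g\cdot a_{i+1}^* )=0 \quad\text{in }\Pi_Q.$$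
   Context: Let $\Bbbk$ be a field, $r>1$ and $m$ positive integers with $r\mid m$, and $\lambda\in\Bbbk$ a primitive $r$-th root of unity, with $r$ coprime to the characteristic of $\Bbbk$. The generalized Taft algebra $T=T_\lambda(r,m)$ is the Hopf algebra generated by $g,x$ with relations $gx=\lambda xg$, $g^m=1$, $x^r=0$, $\Delta(g)=g\otimes g$, $\Delta(x)=1\otimes x+x\otimes g$, $\varepsilon(g)=1,\varepsilon(x)=0$, $S(g)=g^{-1}$, $S(x)=-xg^{-1}$. An action of $T$ on an algebra $A$ is a $T$-module algebra structure; so $g$ acts by an algebra automorphism and $x\cdot(ab)=a(x\cdot b)+(x\cdot a)(g\cdot b)$. It is inner faithful if no nonzero Hopf ideal $I$ of $T$ satisfies $I\cdot A=0$. Vertex indices are taken modulo $n$. $\overline{Q}$ has vertices $0,\dots,n-1$ and arrows $a_i:i\to i+1$, $a_i^*:i+1\to i$; in $\Bbbk\overline{Q}$, $e_i$ is the trivial path at $i$, $s(a),t(a)$ source and target, and $pq$ is the concatenation ($p$ then $q$) if $t(p)=s(q)$, else $0$. $\Pi_Q=\Bbbk\overline{Q}/(\Omega)$, $(\Omega)$ the ideal generated by $a_i^*a_i-a_{i+1}a_{i+1}^*$. The action descends to $\Pi_Q$ if $(\Omega)$ is stable under $g$ and $x$. A linear action: $g$ acts by a path-length-preserving automorphism ($g\cdot e_i=e_{g\cdot i}$) and $x$ maps vertices into the span of vertices and arrows into the span of vertices and arrows. Then there are scalars $\gamma_i$ with $x\cdot e_i=\gamma_ie_i-\gamma_i\lambda^{-1}e_{g\cdot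 i}$; the quiver-Taft map $\sigma$ is the linear map on the span of vertices and arrows with $\sigma(e_i)=0$ and $\sigma(a)=x\cdot a-\gamma_{t(a)}a+\gamma_{s(a)}\lambda^{-1}(g\cdot a)$ for arrows $a$. *)

From HB Require Import structures.
From mathcomp Require Import all_boot all_order all_algebra.
Set Implicit Arguments. Unset Strict Implicit. Unset Printing Implicit Defensive.
Import GRing.Theory.
Local Open Scope ring_scope.

(* The path algebra k\overline{Q} of the double cyclic quiver on n vertices. *)
(* A path is encoded by its start vertex and the list of its steps: from the *)
(* current vertex u, the step [true] is the arrow a_u : u -> u+1 and the     *)
(* step [false] is the arrow a_{u-1}^* : u -> u-1 (these are exactly the two *)
(* arrows leaving u).  This is a bijection with the paths of \overline{Q}.   *)
(* Elements of k\overline{Q} are the finitely supported functions            *)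
(* path -> k (coefficient of each path); [pmul] is the convolution product,  *)
(* i.e. the bilinear extension of concatenation (p then q, 0 if t(p)<>s(q)).  *)
Section PathAlgebra.
Variables (k : fieldType) (n : nat).

Definition vert := 'Z_n.
Definition path := (vert * seq bool)%type.

Definition ptgt (p : path) : vert :=
  p.1 + (count id p.2)%:R - (count negb p.2)%:R.

Definition pel := path -> k.

Definition pzero : pel := fun _ => 0.
Definition padd (f h : pel) : pel := fun p => f p + h p.
Definition psub (f h : pel) : pel := fun p => f p - h p.
Definition pscale (c : k) (f : pel) : pel := fun p => c * f p.
Definition pmul (f h : pel) : pel := fun p =>
  \sum_(j < (size p.2).+1)
     f (p.1, take j p.2) * h (ptgt (p.1, take j p.2), drop j p.2).
Definition pone : pel := fun p => if nilp p.2 then 1 else 0.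
Definition pbasis (q : path) : pel := fun p => if p == q then 1 else 0.

Definition vtx (i : vert) : pel := pbasis (i, [::]).
Definition arr (i : vert) : pel := pbasis (i, [:: true]).
Definition arrs (i : vert) : pel := pbasis (i + 1, [:: false]).

Definition arrow := (vert * bool)%type.
Definition arrp (a : arrow) : pel := if a.2 then arr a.1 else arrs a.1.
Definition asrc (a : arrow) : vert := if a.2 then a.1 else a.1 + 1.
Definition atgt (a : arrow) : vert := if a.2 then a.1 + 1 else a.1.

Definition fin_supp (f : pel) : Prop :=
  exists N : nat, forall p : path, (N <= size p.2)%N -> f p = 0.

Definition deg_le (N : nat) (f : pel) : Prop :=
  forall p : path, (N < size p.2)%N -> f p = 0.

Definition homog (l : nat) (f : pel) : Prop :=
  forall p : path, size p.2 != l -> f p = 0.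

Definition Omega (i : vert) : pel :=
  psub (pmul (arrs i) (arr i)) (pmul (arr (i + 1)) (arrs (i + 1))).

(* membership in the two-sided ideal (Omega) of k\overline{Q};
   "f = 0 in Pi_Q" means in_Omega f *)
Definition in_Omega (f : pel) : Prop :=
  exists (N : nat) (u : 'I_N -> pel) (j : 'I_N -> vert) (v : 'I_N -> pel),
    (forall l, fin_supp (u l) /\ fin_supp (v l)) /\
    f = (fun p => \sum_(l < N) pmul (pmul (u l) (Omega (j l))) (v l) p).

Definition lin_endo (F : pel -> pel) : Prop :=
  (forall f, fin_supp f -> fin_supp (F f)) /\
  (forall f h, fin_supp f -> fin_supp h -> F (padd f h) = padd (F f) (F h)) /\
  (forall c f, fin_supp f -> F (pscale c f) = pscale c (F f)).

End PathAlgebra.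

(* The generalized Taft algebra T = T_lam(r,m), modelled on its PBW basis    *)
(* g^a x^b (a < m, b < r): an element is its coefficient function.           *)
(* Multiplication: g^a1 x^b1 . g^a2 x^b2 = lam^(-b1 a2) g^(a1+a2) x^(b1+b2)   *)
(* (using x g = lam^-1 g x, g^m = 1, x^r = 0).  Delta, eps are the algebra    *)
(* maps with Delta g = g(x)g, Delta x = 1(x)x + x(x)g, eps g = 1, eps x = 0;   *)
(* S is the anti-algebra map with S g = g^-1, S x = - x g^-1.                 *)
Section Taft.
Variables (k : fieldType) (r m : nat) (lam : k).

Definition Tel := 'I_m -> 'I_r -> k.

(* the basis element g^a x^b (which is 0 when b >= r, and g^m = 1) *)
Definition tE (a b : nat) : Tel :=
  fun i j => if ((i : nat) == (a %% m)%N) && ((j : nat) == b) then 1 else 0.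

Definition tzero : Tel := fun _ _ => 0.
Definition tadd (s t : Tel) : Tel := fun i j => s i j + t i j.
Definition tscale (c : k) (t : Tel) : Tel := fun i j => c * t i j.

Definition tmul (s t : Tel) : Tel := fun i j =>
  \sum_(a1 < m) \sum_(b1 < r) \sum_(a2 < m) \sum_(b2 < r)
     s a1 b1 * t a2 b2 * lam ^- (b1 * a2) * tE (a1 + a2) (b1 + b2) i j.

Definition tpow (s : Tel) (e : nat) : Tel := iter e (tmul s) (tE 0 0).

Definition TT := 'I_m -> 'I_r -> 'I_m -> 'I_r -> k.

Definition ttens (u v : Tel) : TT := fun a b c d => u a b * v c d.
Definition ttadd (U V : TT) : TT := fun a b c d => U a b c d + V a b c d.

Definition ttmul (U V : TT) : TT := fun a b c d =>
  \sum_(a1 < m) \sum_(b1 < r) \sum_(c1 < m) \sum_(d1 < r)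
  \sum_(a2 < m) \sum_(b2 < r) \sum_(c2 < m) \sum_(d2 < r)
     U a1 b1 c1 d1 * V a2 b2 c2 d2 *
     ttens (tmul (tE a1 b1) (tE a2 b2)) (tmul (tE c1 d1) (tE c2 d2)) a b c d.

Definition ttpow (U : TT) (e : nat) : TT :=
  iter e (ttmul U) (ttens (tE 0 0) (tE 0 0)).

Definition Delta_g : TT := ttens (tE 1 0) (tE 1 0).
Definition Delta_x : TT :=
  ttadd (ttens (tE 0 0) (tE 0 1)) (ttens (tE 0 1) (tE 1 0)).

Definition tDelta (t : Tel) : TT := fun a b c d =>
  \sum_(i < m) \sum_(j < r)
     t i j * ttmul (ttpow Delta_g i) (ttpow Delta_x j) a b c d.

Definition teps (t : Tel) : k :=
  \sum_(i < m) \sum_(j < r) t i j * ((1 : k) ^+ i * (0 : k) ^+ j).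

Definition tginv : Tel := tE (m - 1) 0.
Definition tS (t : Tel) : Tel := fun a b =>
  \sum_(i < m) \sum_(j < r)
     t i j * tmul (tpow (tscale (-1) (tmul (tE 0 1) tginv)) j) (tpow tginv i) a b.

Definition hopf_ideal (I : Tel -> Prop) : Prop :=
  I tzero /\
  (forall s t, I s -> I t -> I (tadd s t)) /\
  (forall c t, I t -> I (tscale c t)) /\
  (forall s t, I t -> I (tmul s t) /\ I (tmul t s)) /\
  (forall t, I t -> teps t = 0) /\
  (forall t, I t -> exists (N : nat) (u v : 'I_N -> Tel),
       (forall l, I (u l) \/ I (v l)) /\
       tDelta t = (fun a b c d => \sum_(l < N) ttens (u l) (v l) a b c d)) /\
  (forall t, I t -> I (tS t)).

End Taft.

Section Action.
Variables (k : fieldType) (n r m : nat) (lam : k).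
Variables (G X : pel k n -> pel k n).

Definition taft_module_algebra : Prop :=
  lin_endo G /\ lin_endo X /\
  (forall f, fin_supp f -> G (X f) = pscale lam (X (G f))) /\
  (forall f, fin_supp f -> iter m G f = f) /\
  (forall f, fin_supp f -> iter r X f = @pzero k n) /\
  (forall f h, fin_supp f -> fin_supp h -> G (pmul f h) = pmul (G f) (G h)) /\
  G (@pone k n) = @pone k n /\
  (forall f h, fin_supp f -> fin_supp h ->
     X (pmul f h) = padd (pmul f (X h)) (pmul (X f) (G h))) /\
  X (@pone k n) = @pzero k n.

Definition tact (t : Tel k r m) (f : pel k n) : pel k n := fun p =>
  \sum_(a < m) \sum_(b < r) t a b * iter a G (iter b X f) p.

Definition inner_faithful : Prop :=
  ~ exists I : Tel k r m -> Prop,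
      hopf_ideal lam I /\ (exists t, I t /\ t <> @tzero k r m) /\
      (forall t f, I t -> fin_supp f -> tact t f = @pzero k n).

Definition linear_action : Prop :=
  (forall (l : nat) f, homog l f -> homog l (G f)) /\
  (forall i, deg_le 0 (X (vtx k i))) /\
  (forall a : arrow n, deg_le 1 (X (arrp k a))).

Definition rotation_action (d : nat) (mu mus : 'Z_n -> k) : Prop :=
  forall i : 'Z_n,
    G (vtx k i) = vtx k (i + d%:R) /\
    G (arr k i) = pscale (mu i) (arr k (i + d%:R)) /\
    G (arrs k i) = pscale (mus i) (arrs k (i + d%:R)).

(* g acts as a reflection: n - (d+i) is -(d+i) in 'Z_n *)
Definition reflection_action (d : nat) (mu mus : 'Z_n -> k) : Prop :=
  forall i : 'Z_n,
    G (vtx k i) = vtx k (- (d%:R + i)) /\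
    G (arr k i) = pscale (mu i) (arrs k (- (d%:R + i + 1))) /\
    G (arrs k i) = pscale (mus i) (arr k (- (d%:R + i + 1))).

Definition descends : Prop :=
  forall f, in_Omega f -> in_Omega (G f) /\ in_Omega (X f).

Definition qsigma (gam : 'Z_n -> k) (a : arrow n) : pel k n :=
  padd (psub (X (arrp k a)) (pscale (gam (atgt a)) (arrp k a)))
       (pscale (gam (asrc a) * lam^-1) (G (arrp k a))).

End Action.

From Pilot Require Import Defs.
From mathcomp Require Import all_boot all_order all_algebra ring zify.
From Stdlib Require Import FunctionalExtensionality.
Set Implicit Arguments. Unset Strict Implicit. Unset Printing Implicit Defensive.
Import GRing.Theory.
Local Open Scope ring_scope.

(* The ideal (Omega) is generated by the relations Omega_i, g acts by an algebra
   automorphism and x by a twisted derivation, x(ab) = a x(b) + x(a) g(b); hence the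
   action descends to Pi_Q iff g(Omega_i) and x(Omega_i) lie in (Omega) for all i.
   For a rotation or a reflection, g(Omega_i) is c a^*a - c' aa^* for the two
   2-cycles at a single vertex, with {c, c'} = {mu_i mu_i^*, mu_(i+1) mu_(i+1)^*};
   it lies in (Omega) iff c = c', since the sum of the coefficients of the two
   2-cycles at a vertex is a linear form vanishing on (Omega).
   Writing x(a) = sigma(a) + gamma_t(a) a - gamma_s(a) lambda^-1 g(a), the Leibniz rule
   gives x(Omega_i) = S_i + gamma_(i+1) Omega_i - gamma_(i+1) lambda^-1 g(Omega_i), with
   S_i the sigma-expression of the statement: the cross terms through the middle
   vertex v carry the factor gamma_v (1 - lambda^-1), and this factor is 0 whenever
   g fixes e_v (apply x to e_v = e_v e_v), while otherwise the product passes through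
   two distinct vertices and vanishes.  So once g(Omega_i) is in (Omega), x(Omega_i)
   is in (Omega) iff S_i is. *)

Lemma big_ord_triangle (R : nmodType) (N : nat) (F : nat -> nat -> R) :
  \sum_(i < N.+1) \sum_(j < (N - i).+1) F i (i + j)%N =
  \sum_(j < N.+1) \sum_(i < j.+1) F i j.
Proof.
transitivity (\sum_(0 <= j < N.+1) \sum_(0 <= i < N.+1)
                (if (i <= j)%N then F i j else 0)); last first.
  rewrite big_mkord; apply: eq_bigr => j _.
  rewrite -(big_mkord xpredT (fun i => F i j)) (big_nat_widen 0 j.+1 N.+1) ?ltn_ord //.
  by rewrite big_mkcondr /=; apply: eq_big_nat => i _; rewrite ltnS.
rewrite exchange_big_nat big_mkord; apply: eq_bigr => i _; symmetry.
rewrite (big_cat_nat (n := i)) //= ?(ltnW (ltn_ord i)) //.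
rewrite [X in X + _]big1_seq ?add0r; last first.
  by move=> j /andP[_]; rewrite mem_index_iota => /andP[_ ji]; rewrite leqNgt ji.
rewrite -{1}(add0n i) big_addn subSn; last by rewrite -ltnS ltn_ord.
by rewrite big_mkord; apply: eq_bigr => j _; rewrite leq_addl addnC.
Qed.

Ltac pel_ring :=
  apply: functional_extensionality => ?; rewrite /padd /psub /pscale /pzero; ring.

Section PathAlgebra.
Variables (k : fieldType) (n : nat).
Implicit Types (f g h u v : pel k n) (x y : vert n) (s t : seq bool).

Lemma ptgt_nil x : ptgt (x, [::]) = x.
Proof. by rewrite /ptgt /= addr0 subr0. Qed.

Lemma ptgt_cat x s t : ptgt (ptgt (x, s), t) = ptgt (x, s ++ t).
Proof. rewrite /ptgt /= !count_cat !natrD; ring. Qed.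

Lemma pmulA f g h : pmul f (pmul g h) = pmul (pmul f g) h.
Proof.
apply: functional_extensionality => -[x s]; rewrite /pmul /=.
pose F i j := f (x, take i s) * g (ptgt (x, take i s), take (j - i) (drop i s))
              * h (ptgt (x, take j s), drop j s).
transitivity (\sum_(i < (size s).+1) \sum_(j < (size s - i).+1) F i (i + j)%N).
  apply: eq_bigr => i _; rewrite mulr_sumr size_drop; apply: eq_bigr => j _.
  by rewrite /F addKn ptgt_cat -takeD drop_drop addnC mulrA.
rewrite big_ord_triangle; apply: eq_bigr => j _; rewrite mulr_suml.
rewrite size_takel ?leq_ord //; apply: eq_bigr => i _.
by rewrite /F take_takel ?leq_ord // take_drop subnK ?leq_ord.
Qed.

Lemma pmulDl f g h : pmul (padd f g) h = padd (pmul f h) (pmul g h).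
Proof.
apply: functional_extensionality => p; rewrite /pmul /padd -big_split.
by apply: eq_bigr => j _; rewrite mulrDl.
Qed.

Lemma pmulDr f g h : pmul f (padd g h) = padd (pmul f g) (pmul f h).
Proof.
apply: functional_extensionality => p; rewrite /pmul /padd -big_split.
by apply: eq_bigr => j _; rewrite mulrDr.
Qed.

Lemma pmulZl c f g : pmul (pscale c f) g = pscale c (pmul f g).
Proof.
apply: functional_extensionality => p; rewrite /pmul /pscale mulr_sumr.
by apply: eq_bigr => j _; rewrite mulrA.
Qed.

Lemma pmulZr c f g : pmul f (pscale c g) = pscale c (pmul f g).
Proof.
apply: functional_extensionality => p; rewrite /pmul /pscale mulr_sumr.
by apply: eq_bigr => j _; rewrite mulrCA.
Qed.

Lemma pmul0l f : pmul (@pzero k n) f = @pzero k n.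
Proof. by apply: functional_extensionality => p; rewrite /pmul big1 // => j _; rewrite mul0r. Qed.

Lemma pmul0r f : pmul f (@pzero k n) = @pzero k n.
Proof. by apply: functional_extensionality => p; rewrite /pmul big1 // => j _; rewrite mulr0. Qed.

Lemma pmul1l f : pmul (@pone k n) f = f.
Proof.
apply: functional_extensionality => -[x s]; rewrite /pmul big_ord_recl /= take0 drop0 ptgt_nil.
rewrite big1 ?addr0 /pone ?mul1r // => j _.
have : (0 < size (take (bump 0 j) s))%N.
  by rewrite size_take; case: ifP => // _; apply: leq_ltn_trans (ltn_ord j).
by rewrite /nilp lt0n => /negbTE ->; rewrite mul0r.
Qed.

Lemma pmul1r f : pmul f (@pone k n) = f.
Proof.
apply: functional_extensionality => -[x s]; rewrite /pmul big_ord_recr /= take_size drop_size.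
rewrite big1 ?add0r /pone ?mulr1 // => j _.
by rewrite /nilp size_drop subn_eq0 leqNgt ltn_ord mulr0.
Qed.

Lemma pmul_pbasis x s y t :
  pmul (pbasis k (x, s)) (pbasis k (y, t)) =
  if ptgt (x, s) == y then pbasis k (x, s ++ t) else @pzero k n.
Proof.
apply: functional_extensionality => -[z u]; rewrite /pmul /pbasis /=.
have split_eq j : (j <= size u)%N ->
    ((z, take j u) == (x, s)) && ((ptgt (z, take j u), drop j u) == (y, t)) =
    [&& z == x, ptgt (x, s) == y, u == s ++ t & j == size s].
  move=> ju; rewrite !xpair_eqE; case: (z =P x) => //= ->; apply/idP/idP.
    case/and3P => /eqP ts /eqP <- /eqP dt.
    by rewrite -ts -dt cat_take_drop size_takel // !eqxx.
  case/and3P => /eqP pt /eqP ut /eqP js.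
  by rewrite ut js take_size_cat // drop_size_cat // pt !eqxx.
transitivity (\sum_(j < (size u).+1)
    ([&& z == x, ptgt (x, s) == y, u == s ++ t & j == size s :> nat])%:R : k).
  apply: eq_bigr => j _; rewrite -split_eq ?leq_ord //.
  by case: (_ == _); case: (_ == _); rewrite ?mulr1 ?mulr0.
case: (ptgt (x, s) =P y) => _; last by rewrite big1 // => j _; rewrite andbF.
rewrite xpair_eqE; case: (z =P x) => _ /=; last by rewrite big1.
case: (u =P s ++ t) => [ust|_] /=; last by rewrite big1.
have su : (size s < (size u).+1)%N by rewrite ltnS ust size_cat leq_addr.
rewrite (bigD1 (Ordinal su)) //= eqxx big1 ?addr0 // => j.
by rewrite -val_eqE /= => /negbTE ->.
Qed.
End PathAlgebra.

Section Arrows.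
Variables (k : fieldType) (n : nat).
Implicit Types (f u v : pel k n) (i x w : vert n) (s : seq bool).

Lemma ptgt1 x (b : bool) : ptgt (x, [:: b]) = if b then x + 1 else x - 1.
Proof. by case: b; rewrite /ptgt /= ?subr0 ?addr0. Qed.

Lemma ptgt_loop x (b : bool) : ptgt (x, [:: b; ~~ b]) = x.
Proof.
rewrite -[[:: b; _]]/([:: b] ++ [:: ~~ b]) -ptgt_cat !ptgt1.
by case: b; rewrite /= ?addrK ?subrK.
Qed.

Lemma vtx_pmul_vtx x w :
  pmul (vtx k x) (vtx k w) = if x == w then vtx k x else @pzero k n.
Proof. by rewrite /vtx pmul_pbasis ptgt_nil. Qed.

Lemma vtx_src_arrp (a : arrow n) : pmul (vtx k (asrc a)) (arrp k a) = arrp k a.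
Proof. by case: a => i []; rewrite /vtx pmul_pbasis ptgt_nil eqxx. Qed.

Lemma arrp_vtx_tgt (a : arrow n) : pmul (arrp k a) (vtx k (atgt a)) = arrp k a.
Proof. by case: a => i []; rewrite /vtx /= pmul_pbasis ptgt1 ?addrK eqxx cats0. Qed.

Lemma arrs_arr i : pmul (arrs k i) (arr k i) = pbasis k (i + 1, [:: false; true]).
Proof. by rewrite pmul_pbasis ptgt1 addrK eqxx. Qed.

Lemma arr_arrs i : pmul (arr k i) (arrs k i) = pbasis k (i, [:: true; false]).
Proof. by rewrite pmul_pbasis ptgt1 eqxx. Qed.

Lemma OmegaE i :
  Omega k i = psub (pbasis k (i + 1, [:: false; true])) (pbasis k (i + 1, [:: true; false])).
Proof. by rewrite /Omega arrs_arr arr_arrs. Qed.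

Definition vanishes_below (N : nat) f := forall p : Defs.path n, (size p.2 < N)%N -> f p = 0.

Lemma vanishes_below_Omega i : vanishes_below 2 (Omega k i).
Proof.
rewrite OmegaE => -[x s] /= hs.
have neq q : size q.2 = 2 -> ((x, s) == q) = false.
  by move=> hq; apply/eqP => e; rewrite -e /= in hq; lia.
by rewrite /psub /pbasis !neq // subrr.
Qed.

Lemma pmul_vanishes_below N u f : vanishes_below N f -> vanishes_below N (pmul u f).
Proof.
move=> hf [x s] /= hs; rewrite /pmul big1 // => j _.
by rewrite hf ?mulr0 //= size_drop (leq_ltn_trans (leq_subr _ _) hs).
Qed.

Lemma pmul_vanishes_below_coefl N u f x s :
  vanishes_below N f -> size s = N -> pmul u f (x, s) = u (x, [::]) * f (x, s).
Proof.
move=> hf hs; rewrite /pmul big_ord_recl /= take0 drop0 ptgt_nil big1 ?addr0 // => j _.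
by rewrite hf ?mulr0 //= size_drop -[bump 0 j]/j.+1 -hs; have := ltn_ord j; lia.
Qed.

Lemma pmul_vanishes_below_coefr N f v x s :
  vanishes_below N f -> size s = N -> pmul f v (x, s) = f (x, s) * v (ptgt (x, s), [::]).
Proof.
move=> hf hs; rewrite /pmul big_ord_recr /= take_size drop_size big1 ?add0r // => j _.
by rewrite hf ?mul0r //= -hs size_takel ?ltn_ord ?(ltnW (ltn_ord j)).
Qed.

(* The coefficients of the 2-cycles a_(w-1)^* a_(w-1) and a_w a_w^* at w. *)
Definition loop_coef w f := f (w, [:: false; true]) + f (w, [:: true; false]).

Lemma loop_coef_pmul w u f v : vanishes_below 2 f ->
  loop_coef w (pmul (pmul u f) v) = u (w, [::]) * loop_coef w f * v (w, [::]).
Proof.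
move=> hf; have huf := pmul_vanishes_below u hf.
rewrite /loop_coef !(pmul_vanishes_below_coefr _ _ huf) //.
rewrite !(pmul_vanishes_below_coefl _ _ hf) // (ptgt_loop w false) (ptgt_loop w true); ring.
Qed.

Lemma loop_coef_Omega w i : loop_coef w (Omega k i) = 0.
Proof.
rewrite OmegaE /loop_coef /psub /pbasis !xpair_eqE !eqseq_cons /= !andbF !andbT.
by rewrite subr0 add0r subrr.
Qed.
End Arrows.

Section OmegaIdeal.
Variables (k : fieldType) (n : nat).
Implicit Types (f g u v w : pel k n) (i j : vert n).

Lemma fin_supp0 : fin_supp (@pzero k n).
Proof. by exists 0%N. Qed.

Lemma fin_suppD f g : fin_supp f -> fin_supp g -> fin_supp (padd f g).
Proof.
move=> [N1 h1] [N2 h2]; exists (maxn N1 N2) => p hp.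
by rewrite /padd h1 ?h2 ?addr0 //; lia.
Qed.

Lemma fin_suppZ c f : fin_supp f -> fin_supp (pscale c f).
Proof. by move=> [N h]; exists N => p hp; rewrite /pscale h ?mulr0. Qed.

Lemma fin_suppB f g : fin_supp f -> fin_supp g -> fin_supp (psub f g).
Proof.
move=> [N1 h1] [N2 h2]; exists (maxn N1 N2) => p hp.
by rewrite /psub h1 ?h2 ?subr0 //; lia.
Qed.

Lemma fin_suppM f g : fin_supp f -> fin_supp g -> fin_supp (pmul f g).
Proof.
move=> [N1 h1] [N2 h2]; exists (N1 + N2)%N => -[x s] /= hp.
rewrite /pmul /= big1 // => j _; have js : (j <= size s)%N := leq_ord j.
case: (leqP N1 j) => hj; first by rewrite h1 ?mul0r //= size_takel.
by rewrite h2 ?mulr0 //= size_drop; lia.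
Qed.

Lemma fin_supp_pbasis (q : Defs.path n) : fin_supp (pbasis k q).
Proof.
exists (size q.2).+1 => p hp; rewrite /pbasis; case: eqP => // epq.
by move: hp; rewrite epq ltnn.
Qed.

Lemma fin_supp1 : fin_supp (@pone k n).
Proof. by exists 1%N => -[x [|b s]]. Qed.

Lemma fin_supp_Omega i : fin_supp (Omega k i).
Proof. by rewrite OmegaE; apply: fin_suppB; apply: fin_supp_pbasis. Qed.

Lemma fin_supp_arr i : fin_supp (arr k i). Proof. exact: fin_supp_pbasis. Qed.

Lemma fin_supp_arrs i : fin_supp (arrs k i). Proof. exact: fin_supp_pbasis. Qed.

Lemma fin_supp_arrp (a : arrow n) : fin_supp (arrp k a).
Proof. by case: a => i []; [apply: fin_supp_arr | apply: fin_supp_arrs]. Qed.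

Lemma lin_endo0 F : lin_endo F -> F (@pzero k n) = @pzero k n.
Proof.
move=> [_ [_ FZ]]; have z0 f : pscale 0 f = @pzero k n.
  by apply: functional_extensionality => p; rewrite /pscale mul0r.
rewrite -(z0 (@pzero k n)) FZ ?z0 //; exact: fin_supp0.
Qed.

Lemma lin_endoB F f g : lin_endo F -> fin_supp f -> fin_supp g ->
  F (psub f g) = psub (F f) (F g).
Proof.
move=> [_ [FD FZ]] hf hg; have subE h h' : psub h h' = padd h (pscale (-1) h').
  by apply: functional_extensionality => p; rewrite /psub /padd /pscale mulN1r.
by rewrite !subE FD ?FZ //; apply: fin_suppZ.
Qed.

Inductive omega_ideal : pel k n -> Prop :=
  | omega_ideal0 : omega_ideal (@pzero k n)
  | omega_ideal_gen u i v : fin_supp u -> fin_supp v ->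
      omega_ideal (pmul (pmul u (Omega k i)) v)
  | omega_idealD f g : omega_ideal f -> omega_ideal g -> omega_ideal (padd f g).

Lemma omega_ideal_fin_supp f : omega_ideal f -> fin_supp f.
Proof.
elim=> [|u i v hu hv|f' g' _ hf _ hg]; first exact: fin_supp0; last exact: fin_suppD.
by apply: fin_suppM => //; apply: fin_suppM => //; apply: fin_supp_Omega.
Qed.

Lemma omega_ideal_Omega i : omega_ideal (Omega k i).
Proof. by have := omega_ideal_gen i fin_supp1 fin_supp1; rewrite pmul1l pmul1r. Qed.

Lemma omega_idealZ c f : omega_ideal f -> omega_ideal (pscale c f).
Proof.
elim=> [|u i v hu hv|f' g' _ hf _ hg].
- have -> : pscale c (@pzero k n) = @pzero k n by pel_ring.
  exact: omega_ideal0.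
- by rewrite -!pmulZl; apply: omega_ideal_gen => //; apply: fin_suppZ.
- have -> : pscale c (padd f' g') = padd (pscale c f') (pscale c g') by pel_ring.
  exact: omega_idealD.
Qed.

Lemma omega_idealB f g : omega_ideal f -> omega_ideal g -> omega_ideal (psub f g).
Proof.
move=> hf hg; have -> : psub f g = padd f (pscale (-1) g) by pel_ring.
by apply: omega_idealD => //; apply: omega_idealZ.
Qed.

Lemma omega_idealN f :
  omega_ideal (pscale (-1) f) <-> omega_ideal f.
Proof.
split=> [/(omega_idealZ (-1))|]; last exact: omega_idealZ.
by have -> : pscale (-1) (pscale (-1) f) = f by pel_ring.
Qed.

Lemma omega_idealDr f g :
  omega_ideal g -> omega_ideal (padd f g) <-> omega_ideal f.
Proof.
move=> hg; split=> [hfg | hf]; last exact: omega_idealD.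
have -> : f = psub (padd f g) g by pel_ring.
exact: omega_idealB.
Qed.

Lemma omega_idealMl w f : fin_supp w -> omega_ideal f -> omega_ideal (pmul w f).
Proof.
move=> hw; elim=> [|u i v hu hv|f' g' _ hf _ hg].
- by rewrite pmul0r; exact: omega_ideal0.
- by rewrite !pmulA; apply: omega_ideal_gen => //; apply: fin_suppM.
- by rewrite pmulDr; exact: omega_idealD.
Qed.

Lemma omega_idealMr w f : fin_supp w -> omega_ideal f -> omega_ideal (pmul f w).
Proof.
move=> hw; elim=> [|u i v hu hv|f' g' _ hf _ hg].
- by rewrite pmul0l; exact: omega_ideal0.
- by rewrite -pmulA; apply: omega_ideal_gen => //; apply: fin_suppM.
- by rewrite pmulDl; exact: omega_idealD.
Qed.

Lemma omega_ideal_sum N (F : 'I_N -> pel k n) : (forall l, omega_ideal (F l)) ->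
  omega_ideal (fun p => \sum_(l < N) F l p).
Proof.
elim: N F => [|N IH] F hF.
  have -> : (fun p => \sum_(l < 0) F l p) = @pzero k n.
    by apply: functional_extensionality => p; rewrite big_ord0.
  exact: omega_ideal0.
have -> : (fun p => \sum_(l < N.+1) F l p) =
          padd (fun p => \sum_(l < N) F (widen_ord (leqnSn N) l) p) (F ord_max).
  by apply: functional_extensionality => p; rewrite big_ord_recr.
by apply: omega_idealD; [apply: IH | ].
Qed.

Lemma in_Omega0 : in_Omega (@pzero k n).
Proof.
exists 0%N, (fun _ => @pzero k n), (fun _ => 0), (fun _ => @pzero k n); split.
  by move=> [].
by apply: functional_extensionality => p; rewrite big_ord0.
Qed.

Lemma in_Omega_gen u i v : fin_supp u -> fin_supp v ->
  in_Omega (pmul (pmul u (Omega k i)) v).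
Proof.
move=> hu hv; exists 1%N, (fun _ => u), (fun _ => i), (fun _ => v); split => //.
by apply: functional_extensionality => p; rewrite big_ord1.
Qed.

Lemma in_OmegaD f g : in_Omega f -> in_Omega g -> in_Omega (padd f g).
Proof.
move=> [N1 [u1 [j1 [v1 [h1 ->]]]]] [N2 [u2 [j2 [v2 [h2 ->]]]]].
pose glue T (a : 'I_N1 -> T) (b : 'I_N2 -> T) (l : 'I_(N1 + N2)) :=
  match split l with inl l1 => a l1 | inr l2 => b l2 end.
have glue_l T a b l : glue T a b (lshift N2 l) = a l.
  by rewrite /glue -[lshift _ _]/(unsplit (inl _ l)) unsplitK.
have glue_r T a b l : glue T a b (rshift N1 l) = b l.
  by rewrite /glue -[rshift _ _]/(unsplit (inr _ l)) unsplitK.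
exists (N1 + N2)%N, (glue _ u1 u2), (glue _ j1 j2), (glue _ v1 v2); split.
  by move=> l; rewrite /glue; case: (split l).
apply: functional_extensionality => p; rewrite /padd big_split_ord.
by congr (_ + _); apply: eq_bigr => l _; rewrite ?glue_l ?glue_r.
Qed.

Lemma in_OmegaP f : omega_ideal f <-> in_Omega f.
Proof.
split; first by elim=> *; [apply: in_Omega0 | apply: in_Omega_gen | apply: in_OmegaD].
case=> N [u [j [v [h ->]]]]; apply: omega_ideal_sum => l.
by have [hu hv] := h l; apply: omega_ideal_gen.
Qed.

Lemma loop_coef_omega_ideal x f : omega_ideal f -> loop_coef x f = 0.
Proof.
elim=> [|u i v _ _|f' g' _ hf _ hg].
- by rewrite /loop_coef /pzero addr0.
- rewrite loop_coef_pmul ?loop_coef_Omega ?mulr0 ?mul0r //; exact: vanishes_below_Omega.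
- by rewrite /loop_coef /padd in hf hg *; rewrite addrACA hf hg addr0.
Qed.

Definition weighted_Omega j (a b : k) : pel k n :=
  psub (pscale a (pmul (arrs k j) (arr k j)))
       (pscale b (pmul (arr k (j + 1)) (arrs k (j + 1)))).

Lemma omega_ideal_weighted_Omega j a b : omega_ideal (weighted_Omega j a b) <-> a = b.
Proof.
split=> [/(loop_coef_omega_ideal (j + 1)) h | <-].
  apply/eqP; rewrite -subr_eq0; apply/eqP; rewrite -h.
  rewrite /weighted_Omega arrs_arr arr_arrs /loop_coef /psub /pscale /pbasis.
  by rewrite !xpair_eqE !eqseq_cons /= !eqxx /= !mulr1 !mulr0 subr0 add0r.
have -> : weighted_Omega j a a = pscale a (Omega k j) by rewrite /weighted_Omega /Omega; pel_ring.
exact/omega_idealZ/omega_ideal_Omega.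
Qed.
End OmegaIdeal.

Section TwistedDerivation.
Variables (k : fieldType) (n : nat) (lam : k) (G X : pel k n -> pel k n).
Implicit Types (f g u v : pel k n) (i j w : vert n).
Hypotheses (linG : lin_endo G) (linX : lin_endo X).
Hypothesis GM : forall f g, fin_supp f -> fin_supp g -> G (pmul f g) = pmul (G f) (G g).
Hypothesis XM : forall f g, fin_supp f -> fin_supp g ->
  X (pmul f g) = padd (pmul f (X g)) (pmul (X f) (G g)).

Let fin_suppG f : fin_supp f -> fin_supp (G f). Proof. exact: linG.1. Qed.
Let fin_suppX f : fin_supp f -> fin_supp (X f). Proof. exact: linX.1. Qed.

Lemma descends_iff_Omega :
  descends G X <-> forall i, omega_ideal (G (Omega k i)) /\ omega_ideal (X (Omega k i)).
Proof.
split=> [Hd i | HOm f /in_OmegaP If].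
  by have [] := Hd _ (proj1 (in_OmegaP _) (omega_ideal_Omega k i)); split; apply/in_OmegaP.
suff [] : omega_ideal (G f) /\ omega_ideal (X f) by split; apply/in_OmegaP.
elim: If => [|u i v hu hv|f1 f2 hf1 [hG1 hX1] hf2 [hG2 hX2]].
- by rewrite !lin_endo0 //; split; exact: omega_ideal0.
- have [hG hX] := HOm i; have hO := fin_supp_Omega k i; have huO := fin_suppM hu hO.
  split.
    by rewrite !GM //; apply: omega_idealMr (fin_suppG hv) (omega_idealMl (fin_suppG hu) hG).
  rewrite !XM // pmulDl; apply: omega_idealD; first exact/omega_ideal_gen/fin_suppX.
  apply: omega_idealD; apply: omega_idealMr (fin_suppG hv) _; first exact: omega_idealMl.
  exact: omega_idealMl (fin_suppX hu) hG.
- have [fs1 fs2] := (omega_ideal_fin_supp hf1, omega_ideal_fin_supp hf2).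
  by rewrite linG.2.1 ?linX.2.1 //; split; apply: omega_idealD.
Qed.

Lemma G_Omega i : G (Omega k i) =
  psub (pmul (G (arrs k i)) (G (arr k i))) (pmul (G (arr k (i + 1))) (G (arrs k (i + 1)))).
Proof.
have [fa fs] := (fin_supp_arr k, fin_supp_arrs k).
by rewrite /Omega lin_endoB ?GM //; apply: fin_suppM.
Qed.

Variable gam : 'Z_n -> k.
Hypothesis X_vtx : forall i,
  X (vtx k i) = psub (pscale (gam i) (vtx k i)) (pscale (gam i * lam^-1) (G (vtx k i))).
Hypothesis G_vtx : forall i, exists j, G (vtx k i) = vtx k j.

Lemma X_fixed_vtx w (c : k) :
  G (vtx k w) = vtx k w -> X (vtx k w) = pscale c (vtx k w) -> c = 0.
Proof.
move=> Gw Xw; have := XM (fin_supp_pbasis k (w, [::])) (fin_supp_pbasis k (w, [::])).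
rewrite -/(vtx k w) vtx_pmul_vtx eqxx Gw Xw pmulZr pmulZl vtx_pmul_vtx eqxx.
move=> /(congr1 (fun f => f (w, [::]))); rewrite /padd /pscale /vtx /pbasis eqxx mulr1 => h.
by apply: (addrI c); rewrite addr0 -h.
Qed.

Lemma pmul_G_vtx_defect w f g : fin_supp g ->
  pmul f (vtx k w) = f -> pmul (vtx k w) g = g ->
  pscale (gam w - gam w * lam^-1) (pmul f (G g)) = @pzero k n.
Proof.
move=> hg fw wg; have [j Gw] := G_vtx w.
have -> : G g = pmul (vtx k j) (G g) by rewrite -{1}wg GM ?Gw //; apply: fin_supp_pbasis.
rewrite -{1}fw -pmulA (pmulA (vtx k w)) vtx_pmul_vtx.
case: (w =P j) => [ej|_]; last by rewrite pmul0l pmul0r; pel_ring.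
rewrite -ej in Gw; rewrite (X_fixed_vtx (c := gam w - gam w * lam^-1) Gw); first by pel_ring.
by rewrite X_vtx Gw; pel_ring.
Qed.

Lemma X_arrp (a : arrow n) : X (arrp k a) =
  padd (qsigma lam G X gam a)
       (padd (pscale (gam (atgt a)) (arrp k a))
             (pscale (- (gam (asrc a) * lam^-1)) (G (arrp k a)))).
Proof. by rewrite /qsigma; pel_ring. Qed.

Lemma X_pmul_arrp (a b : arrow n) : atgt a = asrc b ->
  X (pmul (arrp k a) (arrp k b)) =
  padd (padd (pmul (arrp k a) (qsigma lam G X gam b)) (pmul (qsigma lam G X gam a) (G (arrp k b))))
       (padd (pscale (gam (atgt b)) (pmul (arrp k a) (arrp k b)))
             (pscale (- (gam (asrc a) * lam^-1)) (G (pmul (arrp k a) (arrp k b))))).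
Proof.
move=> ab; have ha := fin_supp_arrp k a; have hb := fin_supp_arrp k b.
have a_tgt := arrp_vtx_tgt k a; rewrite ab in a_tgt.
have := pmul_G_vtx_defect hb a_tgt (vtx_src_arrp k b).
rewrite XM // GM // (X_arrp a) (X_arrp b) !pmulDr !pmulDl !pmulZr !pmulZl ab.
move=> defect; apply: functional_extensionality => p.
move: (congr1 (fun F => F p) defect); rewrite /padd /pscale /pzero => {}defect.
by rewrite -[RHS]addr0 -defect; ring.
Qed.

Definition sigma_Omega i : pel k n :=
  psub (psub (padd (pmul (arrs k i) (qsigma lam G X gam (i, true)))
                   (pmul (qsigma lam G X gam (i, false)) (G (arr k i))))
             (pmul (arr k (i + 1)) (qsigma lam G X gam (i + 1, false))))
       (pmul (qsigma lam G X gam (i + 1, true)) (G (arrs k (i + 1)))).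

Lemma X_Omega i : X (Omega k i) =
  padd (sigma_Omega i) (padd (pscale (gam (i + 1)) (Omega k i))
                             (pscale (- (gam (i + 1) * lam^-1)) (G (Omega k i)))).
Proof.
have E1 := X_pmul_arrp (a := (i, false)) (b := (i, true)) erefl.
have E2 := X_pmul_arrp (a := (i + 1, true)) (b := (i + 1, false)) erefl.
rewrite /= in E1 E2.
have [fa fs] := (fin_supp_arr k, fin_supp_arrs k).
rewrite /Omega (lin_endoB linX) 1?(lin_endoB linG); try by apply: fin_suppM.
by rewrite E1 E2 /sigma_Omega; pel_ring.
Qed.

Lemma omega_ideal_X_Omega i : omega_ideal (G (Omega k i)) ->
  omega_ideal (X (Omega k i)) <-> omega_ideal (sigma_Omega i).
Proof.
move=> hG; rewrite X_Omega omega_idealDr //.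
by apply: omega_idealD; apply: omega_idealZ => //; apply: omega_ideal_Omega.
Qed.
End TwistedDerivation.

Section RotationReflection.
Variables (k : fieldType) (n : nat) (G : pel k n -> pel k n) (d : nat) (mu mus : 'Z_n -> k).
Hypothesis linG : lin_endo G.
Hypothesis GM : forall f g, fin_supp f -> fin_supp g -> G (pmul f g) = pmul (G f) (G g).

Lemma G_Omega_rotation i : rotation_action G d mu mus ->
  G (Omega k i) = weighted_Omega (i + d%:R) (mus i * mu i) (mu (i + 1) * mus (i + 1)).
Proof.
move=> R; have [_ [Ga Gs]] := R i; have [_ [Ga1 Gs1]] := R (i + 1).
rewrite G_Omega // Ga Gs Ga1 Gs1 !pmulZl !pmulZr /weighted_Omega addrAC; pel_ring.
Qed.

Lemma G_Omega_reflection i : reflection_action G d mu mus ->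
  G (Omega k i) = pscale (-1)
    (weighted_Omega (- (d%:R + (i + 1) + 1)) (mu (i + 1) * mus (i + 1)) (mus i * mu i)).
Proof.
move=> R; have [_ [Ga Gs]] := R i; have [_ [Ga1 Gs1]] := R (i + 1).
rewrite G_Omega // Ga Gs Ga1 Gs1 !pmulZl !pmulZr /weighted_Omega.
have -> : - (d%:R + (i + 1) + 1) + 1 = - (d%:R + i + 1) :> vert n by ring.
pel_ring.
Qed.

Lemma omega_ideal_G_Omega i :
  rotation_action G d mu mus \/ reflection_action G d mu mus ->
  omega_ideal (G (Omega k i)) <-> mu i * mus i - mu (i + 1) * mus (i + 1) = 0.
Proof.
rewrite (rwP eqP) subr_eq0 -(rwP eqP).
case=> R; first by rewrite G_Omega_rotation // omega_ideal_weighted_Omega [mus i * _]mulrC.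
rewrite G_Omega_reflection // omega_idealN omega_ideal_weighted_Omega [mus i * _]mulrC.
by split=> ->.
Qed.
End RotationReflection.

Unset Implicit Arguments.

Theorem lemma2p7 (k : fieldType) (n r m : nat) (lam : k) (d : nat)
  (mu mus gam : 'Z_n -> k) (G X : pel k n -> pel k n) :
  (3 <= n)%N -> (1 < r)%N -> (0 < m)%N -> (r %| m)%N ->
  r.-primitive_root lam ->
  (forall p : nat, p \in [pchar k] -> coprime p r) ->
  (d < n)%N ->
  (forall i, mu i != 0) -> (forall i, mus i != 0) ->
  taft_module_algebra r m lam G X ->
  linear_action G X ->
  (rotation_action G d mu mus \/ reflection_action G d mu mus) ->
  inner_faithful r m lam G X ->
  (forall i : 'Z_n,
     X (vtx k i) = psub (pscale (gam i) (vtx k i))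
                        (pscale (gam i * lam^-1) (G (vtx k i)))) ->
  descends G X <->
  ((forall i : 'Z_n, mu i * mus i - mu (i + 1) * mus (i + 1) = 0) /\
   (forall i : 'Z_n,
      in_Omega (psub (psub (padd (pmul (arrs k i) (qsigma lam G X gam (i, true)))
                                  (pmul (qsigma lam G X gam (i, false)) (G (arr k i))))
                           (pmul (arr k (i + 1)) (qsigma lam G X gam (i + 1, false))))
                     (pmul (qsigma lam G X gam (i + 1, true)) (G (arrs k (i + 1))))))).
Proof.
move=> _ _ _ _ _ _ _ _ _ HMA _ RR _ X_vtx.
have [linG [linX [_ [_ [_ [GM [_ [XM _]]]]]]]] := HMA.
have G_vtx i : exists j, G (vtx k i) = vtx k j by case: RR => R; eexists; apply: (R i).1.
have GOm i := omega_ideal_G_Omega linG GM i RR.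
have XOm i := omega_ideal_X_Omega linG linX GM XM X_vtx G_vtx i.
rewrite (descends_iff_Omega linG linX GM XM); split=> [HOm | [Hmu HSig] i].
  split=> i; have [hG hX] := HOm i; first exact/GOm.
  exact/in_OmegaP/(XOm i hG).
have hG : omega_ideal (G (Omega k i)) by apply/GOm.
by split=> //; apply/(XOm i hG)/in_OmegaP/HSig.
Qed.
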